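(* For $n_1,n_2\ge 1$ and irreducible vectors $\vec{\mathsf b}\in\mathrm{Vec}(\mathrm{E(NE)}^{n_1-1})$, $\vec{\mathsf b}'\in\mathrm{Vec}(\mathrm{E(NE)}^{n_2-1})$, define $$\vec{\mathsf b}+\vec{\mathsf b}'=(\mathsf b_0,\dots,\mathsf b_{2n_1-1},\ \mathsf b'_0+n_1,\dots,\mathsf b'_{2n_2-1}+n_1)\in\mathrm{Vec}(\mathrm{E(NE)}^{n_1+n_2-1}).$$ Then every $\vec{\mathsf b}\in\mathrm{Vec}(\mathrm{E(NE)}^{n-1})$ ($n\ge1$) can be written as a sum $\vec{\mathsf b}^{(1)}+\cdots+\vec{\mathsf b}^{(r)}$ of irreducible vectors $\vec{\mathsf b}^{(i)}\in\mathrm{Vec}(\mathrm{E(NE)}^{k_i-1})$ with $k_1+\cdots+k_r=n$ (the sum being taken left to right, with the shift by the total size of the preceding summands). Moreover, $\vec{\mathsf b}$ is $t$-$\mathsf{Pop}$-sortable in $\mathrm{Vec}(\mathrm{E(NE)}^{n-1})$ if and only if each $\vec{\mathsf b}^{(i)}$ is $t$-$\mathsf{Pop}$-sortable in $\mathrm{Vec}(\mathrm{E(NE)}^{k_i-1})$.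
   Context: For $\nu=\mathrm{E(NE)}^{n-1}$ (a path of $2n-1$ steps ending at height $n-1$), $\mathrm{Vec}(\nu)$ is the set of integer vectors $(\mathsf b_0,\dots,\mathsf b_{2n-1})$ with $\mathsf b_{2k+1}=k$ for $0\le k\le n-1$, $\lfloor i/2\rfloor\le\mathsf b_i\le n-1$ for all $i$, and such that $\mathsf b_i=k$ implies $\mathsf b_j\le k$ for all $i+1\le j\le 2k+1$. With the componentwise order it is a finite lattice isomorphic to the Tamari lattice $\mathrm{Tam}_n$. A vector is irreducible if $\mathsf b_0=\mathsf b_{2n-1}$ (i.e. $\mathsf b_0=n-1$). For a finite lattice $M$ with minimum $\hat0$, $\mathsf{Pop}_M(x)=\bigwedge(\{y: y\lessdot x\}\cup\{x\})$ and $x$ is $t$-$\mathsf{Pop}$-sortable if $\mathsf{Pop}_M^t(x)=\hat 0$. *)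

From mathcomp Require Import all_boot.
Set Implicit Arguments. Unset Strict Implicit. Unset Printing Implicit Defensive.

(* Vec(E(NE)^{n-1}) membership *)
Definition in_vec (n : nat) (b : seq nat) : bool :=
  [&& size b == 2 * n,
      [forall k : 'I_n, nth 0 b (2 * k + 1) == k],
      [forall i : 'I_(2 * n), (i./2 <= nth 0 b i) && (nth 0 b i <= n.-1)] &
      [forall i : 'I_(2 * n), forall j : 'I_(2 * n),
         ((i.+1 <= j) && (j <= 2 * nth 0 b i + 1)) ==> (nth 0 b j <= nth 0 b i)]].

Definition irreducible_vec (n : nat) (b : seq nat) : bool :=
  nth 0 b 0 == nth 0 b (2 * n).-1.

(* Iterated sum of vectors, left to right: each summand (k, b) is a vector of
   Vec(E(NE)^{k-1}); later summands are shifted by the total size of the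
   preceding ones.  b + b' = b ++ map (+ n1) b'. *)
Fixpoint vsum (ds : seq (nat * seq nat)) : seq nat :=
  match ds with
  | [::] => [::]
  | (k, b) :: ds' => b ++ map (addn k) (vsum ds')
  end.

Definition vle (b c : seq nat) : bool := all2 leq b c.
Definition vlt (b c : seq nat) : bool := vle b c && (b != c).

Definition covby (n : nat) (y x : seq nat) : Prop :=
  [/\ in_vec n y, in_vec n x, vlt y x &
      forall w, in_vec n w -> vlt y w -> ~~ vlt w x].

Definition pop_set (n : nat) (x y : seq nat) : Prop := y = x \/ covby n y x.

Definition is_pop (n : nat) (x z : seq nat) : Prop :=
  [/\ in_vec n z,
      forall y, pop_set n x y -> vle z y &
      forall w, in_vec n w -> (forall y, pop_set n x y -> vle w y) -> vle w z].

Inductive pop_iter (n : nat) : nat -> seq nat -> seq nat -> Prop :=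
  | pop_iter0 x : pop_iter n 0 x x
  | pop_iterS t x y z : is_pop n x y -> pop_iter n t y z -> pop_iter n t.+1 x z.

Definition is_bottom (n : nat) (z : seq nat) : Prop :=
  in_vec n z /\ forall w, in_vec n w -> vle z w.

Definition pop_sortable (n t : nat) (x : seq nat) : Prop :=
  exists z, pop_iter n t x z /\ is_bottom n z.

From mathcomp Require Import all_boot zify.
Set Implicit Arguments. Unset Strict Implicit. Unset Printing Implicit Defensive.

(* For x1 in Vec(n1) and x2 in Vec(n2), every element of Vec(n1 + n2) below
   x1 + x2 is again a sum w1 + w2 (its first 2 n1 entries stay below n1), and
   + is an order embedding of Vec(n1) x Vec(n2) onto this down-set, which
   contains the minimum.  Hence the elements covered by x1 + x2 are obtained by
   lowering exactly one summand to an element it covers, Pop acts summandwise,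
   Pop(x1 + x2) = Pop(x1) + Pop(x2), and as the minimum of Vec(n1 + n2) is the
   sum of the minima, x1 + x2 is t-Pop-sortable iff both summands are.
   Finally every b in Vec(n) with n > 0 splits off a first summand of size
   m = b_0 + 1, irreducible since b_(2m-1) = m - 1 = b_0. *)

Lemma vleP (a b : seq nat) :
  reflect (size a = size b /\ forall i, nth 0 a i <= nth 0 b i) (vle a b).
Proof.
apply: (iffP idP); elim: a b => [|x a IH] [|y b] //=.
- case/andP=> le_xy /IH[size_ab le_ab]; split; first by rewrite size_ab.
  by move=> [|i] //=; apply: le_ab.
- by case.
- by case.
- case=> [[size_ab] le_ab]; rewrite (le_ab 0) /=; apply: IH.
  by split=> // i; apply: (le_ab i.+1).
Qed.

Lemma vle_refl (a : seq nat) : vle a a.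
Proof. by apply/vleP. Qed.

Lemma vle_anti (a b : seq nat) : vle a b -> vle b a -> a = b.
Proof.
move=> /vleP[sab le_ab] /vleP[_ le_ba]; apply: (eq_from_nth (x0 := 0)) => // i _.
by apply/eqP; rewrite eqn_leq le_ab le_ba.
Qed.

Definition vadd (k : nat) (x y : seq nat) : seq nat := x ++ map (addn k) y.

Lemma vsum_cons k b ds : vsum ((k, b) :: ds) = vadd k b (vsum ds).
Proof. by []. Qed.

Lemma size_vadd k x y : size (vadd k x y) = size x + size y.
Proof. by rewrite size_cat size_map. Qed.

Lemma nth_vadd k x y i : nth 0 (vadd k x y) i =
  if i < size x then nth 0 x i
  else if i - size x < size y then k + nth 0 y (i - size x) else 0.
Proof.
rewrite /vadd nth_cat; case: ifP => // _; case: ifP => lt_i.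
- by rewrite (nth_map 0).
- by rewrite nth_default // size_map leqNgt lt_i.
Qed.

Section VaddOrder.

Variables (k : nat) (x1 x2 y1 y2 : seq nat).
Hypothesis size_x1y1 : size x1 = size y1.

Lemma vle_vadd : vle (vadd k x1 x2) (vadd k y1 y2) = vle x1 y1 && vle x2 y2.
Proof.
apply/vleP/andP=> [[]|[/vleP[_ le1] /vleP[size_x2y2 le2]]].
  rewrite !size_vadd size_x1y1 => /addnI size_x2y2 le_sum.
  split; apply/vleP; split=> // i.
    have [lt_i|ge_i] := ltnP i (size y1); last by rewrite !nth_default ?size_x1y1.
    by have := le_sum i; rewrite !nth_vadd size_x1y1 lt_i.
  have [lt_i|ge_i] := ltnP i (size y2); last by rewrite !nth_default ?size_x2y2.
  have := le_sum (i + size y1).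
  by rewrite !nth_vadd size_x1y1 size_x2y2 ltnNge leq_addl addnK /= lt_i leq_add2l.
split=> [|i]; first by rewrite !size_vadd size_x1y1 size_x2y2.
rewrite !nth_vadd size_x1y1 size_x2y2.
by case: ifP => // _; case: ifP => // _; rewrite leq_add2l.
Qed.

Lemma vadd_inj : vadd k x1 x2 = vadd k y1 y2 -> x1 = y1 /\ x2 = y2.
Proof.
move/eqP; rewrite /vadd eqseq_cat // => /andP[/eqP -> /eqP eq_map]; split=> //.
by apply: inj_map eq_map => a b /addnI.
Qed.

Lemma vlt_vadd :
  vlt (vadd k x1 x2) (vadd k y1 y2) = [&& vle x1 y1, vle x2 y2 & (x1 != y1) || (x2 != y2)].
Proof.
rewrite /vlt vle_vadd -negb_and; case: (vle x1 y1) (vle x2 y2) => [] [] //=.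
by congr (~~ _); apply/eqP/andP=> [/vadd_inj[-> ->]|[/eqP-> /eqP->]].
Qed.

End VaddOrder.

(* [i <= 2 * b_i + 1] encodes [i./2 <= b_i], and [b_i < n] encodes [b_i <= n - 1]. *)
Definition vec_spec (n : nat) (b : seq nat) : Prop :=
  [/\ size b = 2 * n,
      forall k, k < n -> nth 0 b (2 * k + 1) = k,
      forall i, i < 2 * n -> i <= 2 * nth 0 b i + 1 /\ nth 0 b i < n &
      forall i j, i < j -> j < 2 * n -> j <= 2 * nth 0 b i + 1 -> nth 0 b j <= nth 0 b i].

Lemma in_vecP n b : reflect (vec_spec n b) (in_vec n b).
Proof.
apply: (iffP and4P) => [[/eqP size_b /forallP odd_b /forallP range_b /forallP nest_b]|].
  split=> //.
  - by move=> k lt_k; apply/eqP/(odd_b (Ordinal lt_k)).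
  - by move=> i lt_i; have /andP[] := range_b (Ordinal lt_i); rewrite /=; lia.
  - move=> i j lt_ij lt_j le_j; have lt_i : i < 2 * n by lia.
    have /forallP/(_ (Ordinal lt_j))/implyP := nest_b (Ordinal lt_i).
    by apply; rewrite /= lt_ij.
case=> size_b odd_b range_b nest_b; split.
- exact/eqP.
- by apply/forallP=> k; apply/eqP/odd_b.
- by apply/forallP=> i; have [] := range_b i (ltn_ord i); lia.
- apply/forallP=> i; apply/forallP=> j; apply/implyP=> /andP[lt_ij le_j].
  exact: nest_b lt_ij (ltn_ord j) le_j.
Qed.

Lemma size_vec n b : in_vec n b -> size b = 2 * n.
Proof. by case/in_vecP. Qed.

Lemma vec_vadd n1 n2 x1 x2 :
  in_vec n1 x1 -> in_vec n2 x2 -> in_vec (n1 + n2) (vadd n1 x1 x2).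
Proof.
case/in_vecP=> size1 odd1 range1 nest1 /in_vecP[size2 odd2 range2 nest2].
apply/in_vecP; split.
- by rewrite size_vadd size1 size2; lia.
- move=> k lt_k; rewrite nth_vadd size1 size2.
  case: ifP => lt_k1; first by apply: odd1; lia.
  have -> : 2 * k + 1 - 2 * n1 = 2 * (k - n1) + 1 by lia.
  rewrite ifT ?odd2; lia.
- move=> i lt_i; rewrite nth_vadd size1 size2.
  case: ifP => lt_i1; first by have := range1 i lt_i1; lia.
  by rewrite ifT; [have := range2 (i - 2 * n1) | ]; lia.
- move=> i j lt_ij lt_j; rewrite !nth_vadd size1 size2.
  have [lt_i1|ge_i1] := ltnP i (2 * n1).
    have [_ lt_xi] := range1 i lt_i1 => le_j.
    have lt_j1 : j < 2 * n1 by lia.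
    by rewrite lt_j1; apply: nest1.
  have -> : (j < 2 * n1) = false by lia.
  rewrite !ifT; try lia.
  by move=> le_j; rewrite leq_add2l; apply: nest2; lia.
Qed.

Lemma vec_split n1 n2 w : in_vec (n1 + n2) w ->
  (forall i, i < 2 * n1 -> nth 0 w i < n1) ->
  exists w1 w2, [/\ in_vec n1 w1, in_vec n2 w2 & w = vadd n1 w1 w2].
Proof.
case/in_vecP=> size_w odd_w range_w nest_w low_w.
have high_w i : 2 * n1 <= i -> i < 2 * (n1 + n2) -> n1 <= nth 0 w i.
  by move=> ge_i lt_i; have := range_w i lt_i; lia.
exists (mkseq (nth 0 w) (2 * n1)).
exists (mkseq (fun i => nth 0 w (2 * n1 + i) - n1) (2 * n2)).
split; first (apply/in_vecP; split).
- by rewrite size_mkseq.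
- by move=> k lt_k; rewrite nth_mkseq ?odd_w; lia.
- by move=> i lt_i; rewrite nth_mkseq //; have := range_w i; have := low_w i; lia.
- by move=> i j lt_ij lt_j; rewrite !nth_mkseq //; try lia; apply: nest_w; lia.
- apply/in_vecP; split.
  + by rewrite size_mkseq.
  + move=> k lt_k; rewrite nth_mkseq; last lia.
    have -> : 2 * n1 + (2 * k + 1) = 2 * (n1 + k) + 1 by lia.
    by rewrite odd_w; lia.
  + move=> i lt_i; rewrite nth_mkseq //.
    by have := range_w (2 * n1 + i); have := high_w (2 * n1 + i); lia.
  + move=> i j lt_ij lt_j; rewrite !nth_mkseq //; last lia.
    have := high_w (2 * n1 + i); have := high_w (2 * n1 + j).
    by have := nest_w (2 * n1 + i) (2 * n1 + j); lia.
- apply: (eq_from_nth (x0 := 0)); first by rewrite size_vadd !size_mkseq size_w; lia.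
  move=> i; rewrite size_w => lt_i; rewrite nth_vadd !size_mkseq.
  case: ifP => lt_i1; first by rewrite nth_mkseq.
  rewrite ifT; last lia.
  rewrite nth_mkseq; last lia.
  have -> : 2 * n1 + (i - 2 * n1) = i by lia.
  by have := high_w i; lia.
Qed.

Lemma vec_below_vadd n1 n2 x1 x2 w : in_vec n1 x1 -> in_vec (n1 + n2) w ->
  vle w (vadd n1 x1 x2) ->
  exists w1 w2, [/\ in_vec n1 w1, in_vec n2 w2 & w = vadd n1 w1 w2].
Proof.
case/in_vecP=> size_x1 _ range_x1 _ w_vec /vleP[_ le_w].
apply: vec_split w_vec _ => i lt_i; apply: leq_ltn_trans (le_w i) _.
by rewrite nth_vadd size_x1 lt_i; case: (range_x1 i lt_i).
Qed.

Definition pop_lower_bound (n : nat) (x w : seq nat) : Prop :=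
  forall y, pop_set n x y -> vle w y.

Lemma pop_set_vec n x y : in_vec n x -> pop_set n x y -> in_vec n y.
Proof. by move=> x_vec [->|[]]. Qed.

Lemma is_pop_vec n x z : is_pop n x z -> in_vec n z.
Proof. by case. Qed.

Section SumCovers.

Variables (n1 n2 : nat) (x1 x2 : seq nat).
Hypotheses (x1_vec : in_vec n1 x1) (x2_vec : in_vec n2 x2).

Let size_x1 : size x1 = 2 * n1. Proof. exact: size_vec. Qed.

Lemma covby_vaddl y1 :
  covby n1 y1 x1 -> covby (n1 + n2) (vadd n1 y1 x2) (vadd n1 x1 x2).
Proof.
case=> y1_vec _ lt_y1x1 max_y1; have size_y1 := size_vec y1_vec.
split; try exact: vec_vadd.
  by rewrite vlt_vadd ?size_y1 // vle_refl eqxx orbF /=; exact: lt_y1x1.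
move=> w w_vec lt_w; apply/negP=> lt_w'; have /andP[le_w' _] := lt_w'.
have [w1 [w2 [w1_vec _ def_w]]] := vec_below_vadd x1_vec w_vec le_w'.
have size_w1 := size_vec w1_vec.
move: lt_w lt_w'; rewrite def_w !vlt_vadd ?size_y1 ?size_w1 //.
case/and3P=> le_y1w1 le_x2w2 ne1 /and3P[le_w1x1 le_w2x2 ne2].
have eq_w2 : w2 = x2 by apply: vle_anti.
move: ne1 ne2; rewrite eq_w2 eqxx !orbF => ne_y1w1 ne_w1x1.
by have := max_y1 w1 w1_vec; rewrite /vlt le_y1w1 ne_y1w1 le_w1x1 ne_w1x1 => /(_ isT).
Qed.

Lemma covby_vaddr y2 :
  covby n2 y2 x2 -> covby (n1 + n2) (vadd n1 x1 y2) (vadd n1 x1 x2).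
Proof.
case=> y2_vec _ lt_y2x2 max_y2.
split; try exact: vec_vadd.
  by rewrite vlt_vadd // vle_refl eqxx /=; exact: lt_y2x2.
move=> w w_vec lt_w; apply/negP=> lt_w'; have /andP[le_w' _] := lt_w'.
have [w1 [w2 [w1_vec w2_vec def_w]]] := vec_below_vadd x1_vec w_vec le_w'.
have size_w1 := size_vec w1_vec.
move: lt_w lt_w'; rewrite def_w !vlt_vadd ?size_w1 //.
case/and3P=> le_x1w1 le_y2w2 ne1 /and3P[le_w1x1 le_w2x2 ne2].
have eq_w1 : w1 = x1 by apply: vle_anti.
move: ne1 ne2; rewrite eq_w1 eqxx /= => ne_y2w2 ne_w2x2.
by have := max_y2 w2 w2_vec; rewrite /vlt le_y2w2 ne_y2w2 le_w2x2 ne_w2x2 => /(_ isT).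
Qed.

Lemma covby_vadd_inv y : covby (n1 + n2) y (vadd n1 x1 x2) ->
  exists y1 y2, y = vadd n1 y1 y2 /\
    ((y1 = x1 /\ covby n2 y2 x2) \/ (y2 = x2 /\ covby n1 y1 x1)).
Proof.
case=> y_vec _ lt_y max_y; have /andP[le_y _] := lt_y.
have [y1 [y2 [y1_vec y2_vec def_y]]] := vec_below_vadd x1_vec y_vec le_y.
have size_y1 := size_vec y1_vec.
exists y1, y2; split=> //; move: lt_y max_y; rewrite def_y vlt_vadd ?size_y1 //.
case/and3P=> le_y1x1 le_y2x2 ne_y max_y.
have [eq_y1|ne_y1] := eqVneq y1 x1.
  left; split=> //; move: ne_y; rewrite eq_y1 eqxx /= => ne_y2.
  split=> //; first by rewrite /vlt le_y2x2.
  move=> w w_vec lt_y2w; have := max_y _ (vec_vadd x1_vec w_vec).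
  by rewrite eq_y1 !vlt_vadd // vle_refl eqxx /= => /(_ lt_y2w).
have [eq_y2|ne_y2] := eqVneq y2 x2.
  right; split=> //; split=> //; first by rewrite /vlt le_y1x1.
  move=> w w_vec lt_y1w; have size_w := size_vec w_vec.
  have := max_y _ (vec_vadd w_vec x2_vec).
  by rewrite eq_y2 !vlt_vadd ?size_y1 ?size_w // vle_refl eqxx !orbF /= => /(_ lt_y1w).
(* Otherwise [vadd n1 x1 y2] lies strictly between [y] and [vadd n1 x1 x2]. *)
have := max_y _ (vec_vadd x1_vec y2_vec).
by rewrite !vlt_vadd ?size_y1 // le_y1x1 ne_y1 !vle_refl le_y2x2 ne_y2 orbT => /(_ isT).
Qed.

Lemma pop_set_vaddl y1 :
  pop_set n1 x1 y1 -> pop_set (n1 + n2) (vadd n1 x1 x2) (vadd n1 y1 x2).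
Proof. by case=> [->|/covby_vaddl]; [left | right]. Qed.

Lemma pop_set_vaddr y2 :
  pop_set n2 x2 y2 -> pop_set (n1 + n2) (vadd n1 x1 x2) (vadd n1 x1 y2).
Proof. by case=> [->|/covby_vaddr]; [left | right]. Qed.

Lemma pop_lower_bound_vadd w1 w2 : in_vec n1 w1 ->
  pop_lower_bound (n1 + n2) (vadd n1 x1 x2) (vadd n1 w1 w2) <->
  pop_lower_bound n1 x1 w1 /\ pop_lower_bound n2 x2 w2.
Proof.
move=> w1_vec; have size_w1 := size_vec w1_vec.
split=> [lb | [lb1 lb2] y].
  split=> y pop_y.
    have size_y := size_vec (pop_set_vec x1_vec pop_y).
    by have /(_ _ (pop_set_vaddl pop_y)) := lb; rewrite vle_vadd ?size_y // => /andP[].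
  by have /(_ _ (pop_set_vaddr pop_y)) := lb; rewrite vle_vadd ?size_x1 // => /andP[].
case=> [->|/covby_vadd_inv[y1 [y2 [-> [[-> cov_y2]|[-> cov_y1]]]]]].
- by rewrite vle_vadd ?size_x1 // lb1 ?lb2 //; left.
- by rewrite vle_vadd ?size_x1 // lb1 ?lb2 //; [right | left].
- have [y1_vec _ _ _] := cov_y1.
  by rewrite vle_vadd ?(size_vec y1_vec) // lb1 ?lb2 //; [left | right].
Qed.

Lemma is_pop_vaddE z : is_pop (n1 + n2) (vadd n1 x1 x2) z <->
  exists z1 z2, [/\ z = vadd n1 z1 z2, is_pop n1 x1 z1 & is_pop n2 x2 z2].
Proof.
split=> [[z_vec lb_z max_z] | [z1 [z2 [-> [z1_vec lb_z1 max_z1] [z2_vec lb_z2 max_z2]]]]].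
  have [z1 [z2 [z1_vec z2_vec def_z]]] :=
    vec_below_vadd x1_vec z_vec (lb_z _ (or_introl erefl)).
  subst z; have [lb_z1 lb_z2] := (pop_lower_bound_vadd z2 z1_vec).1 lb_z.
  exists z1, z2; split=> //; split=> // w w_vec lb_w.
    have := max_z _ (vec_vadd w_vec z2_vec)
                  ((pop_lower_bound_vadd z2 w_vec).2 (conj lb_w lb_z2)).
    by rewrite vle_vadd ?(size_vec w_vec) ?(size_vec z1_vec) // => /andP[].
  have := max_z _ (vec_vadd z1_vec w_vec)
                ((pop_lower_bound_vadd w z1_vec).2 (conj lb_z1 lb_w)).
  by rewrite vle_vadd // => /andP[].
split; first exact: vec_vadd.
  exact/pop_lower_bound_vadd.
move=> w w_vec lb_w.
have [w1 [w2 [w1_vec w2_vec def_w]]] :=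
  vec_below_vadd x1_vec w_vec (lb_w _ (or_introl erefl)).
subst w; have [lb_w1 lb_w2] := (pop_lower_bound_vadd w2 w1_vec).1 lb_w.
by rewrite vle_vadd ?(size_vec w1_vec) ?(size_vec z1_vec) // max_z1 ?max_z2.
Qed.

End SumCovers.

Definition vec_bot (n : nat) : seq nat := mkseq half (2 * n).

Lemma vec_bot_vec n : in_vec n (vec_bot n).
Proof.
apply/in_vecP; split.
- by rewrite size_mkseq.
- by move=> k lt_k; rewrite nth_mkseq; lia.
- by move=> i lt_i; rewrite nth_mkseq //; lia.
- by move=> i j lt_ij lt_j; rewrite !nth_mkseq //; lia.
Qed.

Lemma vec_bot_min n w : in_vec n w -> vle (vec_bot n) w.
Proof.
case/in_vecP=> size_w _ range_w _; apply/vleP; rewrite size_mkseq size_w.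
split=> // i; have [lt_i|ge_i] := ltnP i (2 * n); last by rewrite nth_default ?size_mkseq.
by rewrite nth_mkseq //; have [] := range_w i lt_i; lia.
Qed.

Lemma is_bottomE n z : is_bottom n z <-> z = vec_bot n.
Proof.
split=> [[z_vec z_min] | ->]; last by split; [exact: vec_bot_vec | exact: vec_bot_min].
by apply: vle_anti; [apply: z_min; exact: vec_bot_vec | exact: vec_bot_min].
Qed.

Lemma vec_bot_vadd n1 n2 : vec_bot (n1 + n2) = vadd n1 (vec_bot n1) (vec_bot n2).
Proof.
apply: (eq_from_nth (x0 := 0)); first by rewrite size_vadd !size_mkseq; lia.
move=> i; rewrite size_mkseq => lt_i; rewrite nth_vadd !size_mkseq nth_mkseq //.
case: ifP => lt_i1; first by rewrite nth_mkseq.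
by rewrite ifT ?nth_mkseq; lia.
Qed.

Lemma pop_sortable0E n x : pop_sortable n 0 x <-> x = vec_bot n.
Proof.
split=> [[z [iter_xz /is_bottomE bot_z]] | ->]; last first.
  by exists (vec_bot n); split; [constructor | exact/is_bottomE].
by inversion iter_xz; subst.
Qed.

Lemma pop_sortableSE n t x :
  pop_sortable n t.+1 x <-> exists2 y, is_pop n x y & pop_sortable n t y.
Proof.
split=> [[z [iter_xz bot_z]] | [y pop_xy [z [iter_yz bot_z]]]].
  by inversion iter_xz; subst; exists y => //; exists z.
by exists z; split=> //; apply: pop_iterS pop_xy iter_yz.
Qed.

Lemma pop_sortable_vadd n1 n2 t x1 x2 : in_vec n1 x1 -> in_vec n2 x2 ->
  pop_sortable (n1 + n2) t (vadd n1 x1 x2) <->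
  pop_sortable n1 t x1 /\ pop_sortable n2 t x2.
Proof.
elim: t x1 x2 => [|t IH] x1 x2 x1_vec x2_vec.
  rewrite !pop_sortable0E vec_bot_vadd; split=> [|[-> ->]] //.
  by apply: vadd_inj; rewrite (size_vec x1_vec) (size_vec (vec_bot_vec n1)).
rewrite !pop_sortableSE; split.
  case=> _ /is_pop_vaddE[] // y1 [y2 [-> pop_y1 pop_y2]].
  rewrite IH ?(is_pop_vec pop_y1) ?(is_pop_vec pop_y2) // => -[sort_y1 sort_y2].
  by split; [exists y1 | exists y2].
case=> [[y1 pop_y1 sort_y1] [y2 pop_y2 sort_y2]].
exists (vadd n1 y1 y2); first by apply/is_pop_vaddE => //; exists y1, y2.
by rewrite IH ?(is_pop_vec pop_y1) ?(is_pop_vec pop_y2).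
Qed.

Lemma in_vec0 w : in_vec 0 w = (w == [::]).
Proof.
apply/idP/eqP=> [/size_vec/size0nil // | ->].
by apply/in_vecP; split=> // i; rewrite muln0.
Qed.

Lemma pop_sortable_nil t : pop_sortable 0 t [::].
Proof.
elim: t => [|t IH]; first exact/pop_sortable0E.
apply/pop_sortableSE; exists [::] => //; split; first by rewrite in_vec0.
  move=> y pop_y; have := @pop_set_vec 0 [::] y.
  by rewrite !in_vec0 => /(_ isT pop_y)/eqP->.
by move=> w; rewrite in_vec0 => /eqP->.
Qed.

Lemma vsum_vec ds : {in ds, forall d, in_vec d.1 d.2} ->
  in_vec (sumn (map fst ds)) (vsum ds).
Proof.
elim: ds => [|[k b] ds IH] ds_vec; first by rewrite in_vec0.
rewrite vsum_cons /=; apply: vec_vadd; first by apply: (ds_vec (k, b)); rewrite mem_head.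
by apply: IH => d d_ds; apply: ds_vec; rewrite inE d_ds orbT.
Qed.

Lemma pop_sortable_vsum t ds : {in ds, forall d, in_vec d.1 d.2} ->
  pop_sortable (sumn (map fst ds)) t (vsum ds) <->
  {in ds, forall d, pop_sortable d.1 t d.2}.
Proof.
elim: ds => [|[k b] ds IH] ds_vec; first by split=> // _; exact: pop_sortable_nil.
have b_vec : in_vec k b by apply: (ds_vec (k, b)); rewrite mem_head.
have {}ds_vec : {in ds, forall d, in_vec d.1 d.2}.
  by move=> d d_ds; apply: ds_vec; rewrite inE d_ds orbT.
rewrite vsum_cons /= pop_sortable_vadd ?vsum_vec // IH //.
split=> [[sort_b sort_ds] d | sort_all].
  by rewrite inE => /predU1P[-> //|]; exact: sort_ds.
split=> [|d d_ds]; first by apply: (sort_all (k, b)); rewrite mem_head.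
by apply: sort_all; rewrite inE d_ds orbT.
Qed.

Lemma vec_split_irreducible n b : 0 < n -> in_vec n b ->
  exists m b1 b2, [/\ 0 < m <= n, in_vec m b1, irreducible_vec m b1,
                      in_vec (n - m) b2 & b = vadd m b1 b2].
Proof.
move=> n_gt0 b_vec; have /in_vecP[_ odd_b range_b nest_b] := b_vec.
have n2_gt0 : 0 < 2 * n by rewrite muln_gt0.
set b0 := nth 0 b 0; have [_ lt_b0n] := range_b 0 n2_gt0.
have low_b i : i < 2 * b0.+1 -> nth 0 b i < b0.+1.
  by case: i => [|i] lt_i //; rewrite ltnS; apply: nest_b; lia.
have b_vec' : in_vec (b0.+1 + (n - b0.+1)) b by rewrite subnKC.
have [b1 [b2 [b1_vec b2_vec def_b]]] := vec_split b_vec' low_b.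
have b1_nth i : i < 2 * b0.+1 -> nth 0 b1 i = nth 0 b i.
  by move=> lt_i; rewrite def_b nth_vadd (size_vec b1_vec) lt_i.
exists b0.+1, b1, b2; split=> //.
rewrite /irreducible_vec !b1_nth; try lia.
have -> : (2 * b0.+1).-1 = 2 * b0 + 1 by lia.
by rewrite odd_b.
Qed.

Lemma vec_irreducible_decomposition n b : in_vec n b ->
  exists ds : seq (nat * seq nat),
    [/\ {in ds, forall d, [/\ 1 <= d.1, in_vec d.1 d.2 & irreducible_vec d.1 d.2]},
        sumn (map fst ds) = n & vsum ds = b].
Proof.
elim/ltn_ind: n b => n IH b b_vec; have [n0|n_gt0] := posnP n.
  by exists [::]; split=> //; move: b_vec; rewrite n0 in_vec0 => /eqP->.
have [m [b1 [b2 [/andP[m_gt0 le_mn] b1_vec b1_irr b2_vec ->]]]] :=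
  vec_split_irreducible n_gt0 b_vec.
have [|ds [ds_irr ds_size ds_sum]] := IH (n - m) _ b2 b2_vec; first lia.
exists ((m, b1) :: ds); split.
- by move=> d; rewrite inE => /predU1P[-> | /ds_irr].
- by rewrite /= ds_size subnKC.
- by rewrite vsum_cons ds_sum.
Qed.

Theorem lemma3p13 (n : nat) (b : seq nat) :
  1 <= n -> in_vec n b ->
  exists ds : seq (nat * seq nat),
    [/\ forall d, d \in ds -> [/\ 1 <= d.1, in_vec d.1 d.2 & irreducible_vec d.1 d.2],
        sumn (map fst ds) = n,
        vsum ds = b &
        forall t : nat,
          pop_sortable n t b <-> (forall d, d \in ds -> pop_sortable d.1 t d.2)].
Proof.
(* The empty decomposition handles [n = 0]. *)
move=> _ b_vec.
have [ds [ds_irr ds_size ds_sum]] := vec_irreducible_decomposition b_vec.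
have ds_vec : {in ds, forall d, in_vec d.1 d.2} by move=> d /ds_irr[].
exists ds; split=> // t.
by rewrite -ds_size -ds_sum pop_sortable_vsum.
Qed.
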